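(* Let $\mu, z \in \mathcal{X}$ and let $P_X$ be a probability distribution on $\mathcal{X}$. The influence function $IF(z; D, \mu, P_X) := \lim_{\varepsilon \downarrow 0} \frac{D(\mu; (1 - \varepsilon) P_X + \varepsilon \delta_z) - D(\mu; P_X)}{\varepsilon}$ exists and equals $IF(z; D, \mu, P_X) = 2 - 2 D(\mu; P_X) - \mathrm{E} \{ h(X, z, \mu) \}$, where $X \sim P_X$. Moreover, $\sup_{z \in \mathcal{X}} | IF(z; D, \mu, P_X) | \leq 4$.
   Context: $(\mathcal{X}, d)$ is a complete separable metric space with its Borel $\sigma$-algebra. Define $h: \mathcal{X}^3 \to \mathbb{R}$ by $h(x_1, x_2, x_3) := \mathbb{I}( x_3 \notin \{x_1, x_2\} ) \dfrac{ d^2(x_1, x_3) + d^2(x_2, x_3) - d^2(x_1, x_2) }{d(x_1, x_3)\, d(x_2, x_3) }$, where $h := 0$ when $x_3 \in \{x_1,x_2\}$. The metric spatial depth of $\mu \in \mathcal{X}$ with respect to a probability distribution $P_X$ on $\mathcal{X}$ is $D(\mu; P_X) := 1 - \frac{1}{2} \mathrm{E} \{ h(X_1, X_2, \mu) \}$, where $X_1, X_2 \sim P_X$ are independent. $\delta_z$ denotes the Dirac point mass at $z$, and $(1-\varepsilon)P_X + \varepsilon\delta_z$ the corresponding mixture distribution. *)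

From HB Require Import structures.
From mathcomp Require Import all_boot all_order all_algebra.
From mathcomp Require Import all_classical all_reals all_analysis.
Set Implicit Arguments. Unset Strict Implicit. Unset Printing Implicit Defensive.
Import Order.TTheory GRing.Theory Num.Theory.
Import numFieldNormedType.Exports.
Local Open Scope classical_set_scope.
Local Open Scope ring_scope.

Section MetricSpatialDepth.
Context {R : realType} {dX : measure_display} {X : measurableType dX}.
Variable dist : X -> X -> R.

Definition is_metric : Prop :=
  [/\ forall x y, dist x y = 0 <-> x = y,
      forall x y, dist x y = dist y x &
      forall x y w, dist x w <= dist x y + dist y w].

Definition metric_complete : Prop :=
  forall u : nat -> X,
    (forall e, 0 < e -> exists N, forall m n, (N <= m)%N -> (N <= n)%N ->
        dist (u m) (u n) < e) ->
    exists l, forall e, 0 < e -> exists N, forall n, (N <= n)%N -> dist (u n) l < e.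

Definition metric_separable : Prop :=
  exists u : nat -> X, forall x e, 0 < e -> exists n, dist x (u n) < e.

Definition metric_open (A : set X) : Prop :=
  forall x, A x -> exists r, 0 < r /\ [set y | dist x y < r] `<=` A.

Definition metric_borel : Prop :=
  @measurable dX X = <<s setT, metric_open >>.

Definition hker (x1 x2 x3 : X) : R :=
  if pselect (x3 = x1 \/ x3 = x2) then 0
  else (dist x1 x3 ^+ 2 + dist x2 x3 ^+ 2 - dist x1 x2 ^+ 2)
         / (dist x1 x3 * dist x2 x3).

Definition depth (mu : X) (Q : set X -> \bar R) : R :=
  1 - 2^-1 * fine (\int[(Q \x Q)%E]_p (hker p.1 p.2 mu)%:E)%E.

Definition Eh_z (Q : set X -> \bar R) (z mu : X) : R :=
  fine (\int[Q]_x (hker x z mu)%:E)%E.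

Definition mixture (Q : set X -> \bar R) (z : X) (eps : R) : set X -> \bar R :=
  fun A => ((1 - eps)%:E * Q A + eps%:E * @dirac _ X z R A)%E.

Definition IF_quotient (mu : X) (Q : set X -> \bar R) (z : X) (eps : R) : R :=
  (depth mu (mixture Q z eps) - depth mu Q) / eps.

Definition influence (mu : X) (Q : set X -> \bar R) (z : X) : R :=
  lim (IF_quotient mu Q z @ 0^'+).

End MetricSpatialDepth.

(* Since [h(x1, x2, mu) / 2] is the cosine of the angle at [mu] of the triangle
   [(x1, x2, mu)], [h + 2] takes values in [[0, 4]], and
   [D(mu; Q) = 2 - E_{Q x Q}(h + 2) / 2].  Working with the nonnegative [h + 2]
   makes Tonelli's theorem available: for the mixture
   [Q_e = (1 - e) P + e delta_z], [E_{Q_e x Q_e}(h + 2)] is a quadratic polynomial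
   in [e] with coefficients [E_{P x P}(h + 2)], [E_P(h(X, z, mu) + 2)] (by symmetry
   of [h] in its first two arguments) and [h(z, z, mu) + 2].  The difference
   quotient is therefore affine in [e] on [(0, 1]], and its limit at [0+] is
   [2 - 2 D(mu; P) - E h(X, z, mu)].  Both expectations of [h] lie in [[-2, 2]],
   so this limit lies in [[-4, 4]]. *)

From HB Require Import structures.
From mathcomp Require Import all_boot all_order all_algebra.
From mathcomp Require Import all_classical all_reals all_analysis.
From mathcomp Require Import measurable_realfun ring lra.
Set Implicit Arguments. Unset Strict Implicit. Unset Printing Implicit Defensive.
Import Order.TTheory GRing.Theory Num.Theory.
Import numFieldNormedType.Exports.
Local Open Scope classical_set_scope.
Local Open Scope ring_scope.

Lemma norm_cosine_law_le2 (R : realFieldType) (a b c : R) :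
  0 < a -> 0 < b -> c <= a + b -> a <= c + b -> b <= c + a ->
  `|(a ^+ 2 + b ^+ 2 - c ^+ 2) / (a * b)| <= 2.
Proof.
move=> a0 b0 cab acb bca; have ab0 : 0 < a * b by rewrite mulr_gt0.
rewrite ler_norml ler_pdivlMr ?ler_pdivrMr//; apply/andP; split; nra.
Qed.

Section metric.
Context {R : realType} {dX : measure_display} {X : measurableType dX}.
Variables (dist : X -> X -> R) (dist_metric : is_metric dist).

Lemma dist_xx x : dist x x = 0.
Proof. by case: dist_metric => dist0 _ _; exact/dist0. Qed.

Lemma dist_ge0 x y : 0 <= dist x y.
Proof.
case: dist_metric => _ distC dist_triangle.
by have := dist_triangle x y x; rewrite dist_xx (distC y x); lra.
Qed.

Lemma dist_gt0 x y : x <> y -> 0 < dist x y.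
Proof.
case: dist_metric => dist0 _ _ xy.
by rewrite lt0r dist_ge0 andbT; apply/eqP => /dist0.
Qed.

Lemma hkerE x1 x2 mu : hker dist x1 x2 mu =
  (dist x1 mu ^+ 2 + dist x2 mu ^+ 2 - dist x1 x2 ^+ 2) / (dist x1 mu * dist x2 mu).
Proof.
rewrite /hker; case: pselect => // -[] mu_eq /=;
  by rewrite -mu_eq dist_xx ?mul0r ?mulr0 invr0 mulr0.
Qed.

Lemma hkerC x1 x2 mu : hker dist x1 x2 mu = hker dist x2 x1 mu.
Proof.
case: dist_metric => _ distC _.
by rewrite !hkerE (distC x1 x2) (addrC (dist x1 mu ^+ 2)) (mulrC (dist x1 mu)).
Qed.

Lemma norm_hker_le2 x1 x2 mu : `|hker dist x1 x2 mu| <= 2.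
Proof.
rewrite /hker; case: pselect => [_ /=|+ /=]; first by rewrite normr0.
move=> /not_orP[x1mu x2mu].
case: dist_metric => _ distC dist_triangle.
apply: norm_cosine_law_le2.
- exact: dist_gt0 (nesym x1mu).
- exact: dist_gt0 (nesym x2mu).
- by rewrite (distC x2 mu); exact: dist_triangle.
- exact: dist_triangle.
- by rewrite (distC x1 x2); exact: dist_triangle.
Qed.

End metric.

Lemma measurable_inv (R : realType) : measurable_fun setT (@GRing.inv R).
Proof.
have -> : @GRing.inv R = fun x => if x == 0 then 0 else x^-1.
  by apply/funext => x; case: eqP => // ->; rewrite invr0.
apply: measurable_fun_if => //; first exact: measurable_fun_eqr.
have -> : setT `&` (fun x : R => x == 0) @^-1` [set false] = [set x | x != 0].
  by apply/seteqP; split => x /=; [case=> _ /negbT|move=> /negbTE].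
apply: open_continuous_measurable_fun; first exact: open_neq.
by move=> x; rewrite inE; exact: inv_continuous.
Qed.

Section measurable_metric.
Context {R : realType} {dX : measure_display} {X : measurableType dX}.
Variables (dist : X -> X -> R) (dist_metric : is_metric dist).
Hypotheses (dist_separable : metric_separable dist) (dist_borel : metric_borel dist).

Lemma measurable_ball x r : measurable [set y | dist x y < r].
Proof.
rewrite dist_borel; apply: sub_sigma_algebra => y /= xy.
case: dist_metric => _ _ dist_triangle.
exists (r - dist x y); split => [|w /= yw]; first by rewrite subr_gt0.
by apply: le_lt_trans (dist_triangle x y w) _; rewrite -ltrBrDl.
Qed.

(* Separability is what makes [dist] jointly measurable: the sublevel sets of
   [dist] are countable unions of products of balls centred at a dense sequence. *)
Lemma measurable_dist : measurable_fun setT (fun p : X * X => dist p.1 p.2).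
Proof.
case: dist_separable => u dense_u; case: dist_metric => _ distC dist_triangle.
apply: (measurability _ (RGenInftyO.measurableE R)) => //.
move=> /= _ [_ [r ->] <-]; rewrite setTI.
suff -> : (fun p : X * X => dist p.1 p.2) @^-1` `]-oo, r[ =
    \bigcup_n \bigcup_k ([set x | dist (u n) x < k.+1%:R^-1] `*`
                         [set y | dist (u n) y < r - k.+1%:R^-1]).
  by do 2 apply: bigcupT_measurable => ?; apply: measurableX; exact: measurable_ball.
apply/seteqP; split => -[x y] /=; rewrite in_itv /=; last first.
  move=> [n _ [k _ [/= unx uny]]]; apply: le_lt_trans (dist_triangle x (u n) y) _.
  by rewrite (distC x); have := ltrD unx uny; rewrite addrCA subrr addr0.
move=> xyr; have gap : 0 < (r - dist x y) / 2 by rewrite divr_gt0// subr_gt0.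
have [k _ /(_ k (leqnn k)) small_k] := near_infty_natSinv_lt (PosNum gap).
have [n xun] := dense_u x k.+1%:R^-1 ltac:(by []).
exists n => //; exists k => //; split => /=; first by rewrite distC.
apply: le_lt_trans (dist_triangle (u n) x y) _; rewrite distC.
move: small_k xun; rewrite /= ltr_pdivlMr//; move: (k.+1%:R^-1) => e; lra.
Qed.

Lemma measurable_hker mu :
  measurable_fun setT (fun p : X * X => hker dist p.1 p.2 mu).
Proof.
have dist_mu : measurable_fun setT (fun x => dist x mu).
  exact: measurable_fun_pair1 measurable_dist.
have [dist_mu1 dist_mu2] : measurable_fun setT (fun p : X * X => dist p.1 mu) /\
    measurable_fun setT (fun p : X * X => dist p.2 mu).
  by split; apply: measurableT_comp dist_mu _.
rewrite (_ : (fun p => _) = fun p : X * X =>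
  (dist p.1 mu ^+ 2 + dist p.2 mu ^+ 2 - dist p.1 p.2 ^+ 2) *
  (dist p.1 mu * dist p.2 mu)^-1); last by apply/funext => p; rewrite hkerE.
apply: measurable_funM.
- apply: measurable_funB; first apply: measurable_funD.
  + exact: measurable_funX dist_mu1.
  + exact: measurable_funX dist_mu2.
  + exact: measurable_funX measurable_dist.
- by apply: measurableT_comp (@measurable_inv R) _; exact: measurable_funM.
Qed.

End measurable_metric.

Section bounded_integral.
Context {R : realType} {d : measure_display} {T : measurableType d}.
Variable m : {measure set T -> \bar R}.

Lemma bounded_integrable (f : T -> R) (c : R) : (m setT < +oo)%E ->
  measurable_fun setT f -> (forall x, `|f x| <= c) -> m.-integrable setT (EFin \o f).
Proof.
move=> mT_fin mf f_bounded; apply: measurable_bounded_integrable => //.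
exists c; split => [|M cM x _]; first exact: num_real.
exact: le_trans (f_bounded x) (ltW cM).
Qed.

Lemma cst_integrable (c : R) :
  (m setT < +oo)%E -> m.-integrable setT (EFin \o cst c).
Proof. by move=> mT_fin; exact: (@bounded_integrable _ `|c|). Qed.

Lemma integral_shift (f : T -> R) (c r : R) : m setT = r%:E ->
  measurable_fun setT f -> (forall x, `|f x| <= c) ->
  (\int[m]_x (f x + c)%:E = (\int[m]_x f x + c * r)%:E)%E.
Proof.
move=> mT mf f_bounded; have mT_fin : (m setT < +oo)%E by rewrite mT ltry.
have f_int := bounded_integrable mT_fin mf f_bounded.
rewrite integralD_EFin ?cst_integrable// integral_cst// mT /=.
by rewrite EFinD EFinM fineK// (integrable_fin_num measurableT f_int).
Qed.

End bounded_integral.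

Lemma norm_Rintegral_le {R : realType} {d : measure_display} {T : measurableType d}
    (P : probability T R) (f : T -> R) (c : R) :
  measurable_fun setT f -> (forall x, `|f x| <= c) -> `|\int[P]_x f x| <= c.
Proof.
move=> mf f_bounded; have PT_fin : (P setT < +oo)%E by rewrite probability_setT ltry.
have f_int := bounded_integrable PT_fin mf f_bounded.
apply: le_trans (le_normr_Rintegral _ f_int) _ => //.
have PT : fine (P setT) = 1 by rewrite probability_setT.
have -> : c = \int[P]_(x in setT) c by rewrite Rintegral_cst// PT mulr1.
by apply: le_Rintegral => //; [exact: integrable_norm|exact: cst_integrable].
Qed.

Section mix_measure.
Context {R : realType} {d : measure_display} {T : measurableType d}.
Variables (m : {finite_measure set T -> \bar R}) (z : T) (a b : {nonneg R}).

Definition mix_measure := measure_add (mscale a m) (mscale b (@dirac _ T z R)).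

HB.instance Definition _ := Measure.on mix_measure.

Let mix_measure_fin : fin_num_fun mix_measure.
Proof.
move=> A mA; rewrite /mix_measure measure_addE /mscale /= fin_numD.
by rewrite !fin_numM// ?fin_num_measure// /dirac; case: (_ \in _).
Qed.

HB.instance Definition _ :=
  Measure_isFinite.Build _ _ _ mix_measure mix_measure_fin.

Lemma mix_measureT : mix_measure setT = (a%:num%:E * m setT + b%:num%:E)%E.
Proof.
rewrite /mix_measure measure_addE.
change (a%:num%:E * m setT + b%:num%:E * \d_z setT =
  a%:num%:E * m setT + b%:num%:E)%E.
by rewrite diracT mule1.
Qed.

Lemma ge0_integral_mix_measure (f : T -> \bar R) : (forall x, 0 <= f x)%E ->
  measurable_fun setT f ->
  (\int[mix_measure]_x f x = a%:num%:E * \int[m]_x f x + b%:num%:E * f z)%E.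
Proof.
move=> f0 mf; rewrite ge0_integral_measure_add// !ge0_integral_mscale//.
by rewrite integral_dirac// diracT mul1e.
Qed.

Lemma ge0_integral_mix_measure_prod (f : T * T -> \bar R) :
  (forall p, 0 <= f p)%E -> measurable_fun setT f ->
  (\int[mix_measure \x mix_measure]_p f p =
   a%:num%:E * (a%:num%:E * \int[m \x m]_p f p + b%:num%:E * \int[m]_x f (x, z))
   + b%:num%:E * (a%:num%:E * \int[m]_y f (z, y) + b%:num%:E * f (z, z)))%E.
Proof.
move=> f0 mf.
have F_mix x : (fubini_F mix_measure f x =
    a%:num%:E * fubini_F m f x + b%:num%:E * f (x, z))%E.
  by rewrite /fubini_F ge0_integral_mix_measure//; exact: measurable_fun_pair2.
have F_ge0 (mu : {measure set T -> \bar R}) x : (0 <= fubini_F mu f x)%E.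
  by apply: integral_ge0 => y _.
have mF (mu : {sigma_finite_measure set T -> \bar R}) :
  measurable_fun setT (fubini_F mu f) by exact: measurable_fun_fubini_tonelli_F.
rewrite fubini_tonelli1// ge0_integral_mix_measure//.
congr (_ * _ + _ * _)%E; last by rewrite F_mix.
under eq_integral do rewrite F_mix.
rewrite ge0_integralD//; last 4 first.
- by move=> x _; exact: mule_ge0.
- exact: measurable_funeM (mF m).
- by move=> x _; exact: mule_ge0.
- exact/measurable_funeM/measurable_fun_pair1.
rewrite !ge0_integralZl//; [|exact: measurable_fun_pair1 mf|exact: mF].
by rewrite -fubini_tonelli1.
Qed.

End mix_measure.

Section depth_influence.
Context {R : realType} {dX : measure_display} {X : measurableType dX}.
Variables (dist : X -> X -> R) (dist_metric : is_metric dist).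
Hypotheses (dist_separable : metric_separable dist) (dist_borel : metric_borel dist).
Variables (P : probability X R) (mu : X).

Let measurable_hker_mu := measurable_hker dist_metric dist_separable dist_borel mu.

Let hker_add2_ge0 x1 x2 : 0 <= hker dist x1 x2 mu + 2.
Proof. by have := norm_hker_le2 dist_metric x1 x2 mu; rewrite ler_norml; lra. Qed.

Lemma measurable_hker_l z : measurable_fun setT (fun x => hker dist x z mu).
Proof. exact: measurable_fun_pair1 measurable_hker_mu. Qed.

Lemma integral_hker_shift (Q : {finite_measure set X -> \bar R}) : Q setT = 1%:E ->
  (\int[Q \x Q]_p (hker dist p.1 p.2 mu + 2)%:E = (4 - 2 * depth dist mu Q)%:E)%E.
Proof.
move=> QT; have QQT : ((Q \x Q) setT = 1%:E)%E.
  rewrite -setXTT product_measure1E//.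
  by change (Q setT * Q setT = 1%:E)%E; rewrite QT mule1.
rewrite (integral_shift QQT measurable_hker_mu) => [|p]; last first.
  exact: norm_hker_le2.
by congr EFin; rewrite /depth /Rintegral; set I := fine _; field.
Qed.

Lemma integral_hker_l_shift z :
  (\int[P]_x (hker dist x z mu + 2)%:E = (Eh_z dist P z mu + 2)%:E)%E.
Proof.
rewrite (integral_shift (probability_setT P) (measurable_hker_l z)) => [|x].
  by rewrite mulr1.
exact: norm_hker_le2.
Qed.

Lemma mixtureE z e (e0 : 0 <= e) (e1 : 0 <= 1 - e) :
  mixture P z e = mix_measure P z (NngNum e1) (NngNum e0).
Proof. by apply/funext => A; rewrite /mixture /mix_measure measure_addE. Qed.

Lemma depth_mixture z e : 0 <= e <= 1 ->
  4 - 2 * depth dist mu (mixture P z e) =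
    (1 - e) * ((1 - e) * (4 - 2 * depth dist mu P) + e * (Eh_z dist P z mu + 2))
    + e * ((1 - e) * (Eh_z dist P z mu + 2) + e * (hker dist z z mu + 2)).
Proof.
case/andP => e0; rewrite -subr_ge0 => e1; rewrite (mixtureE z e0 e1).
set M := mix_measure P z _ _.
have MT : M setT = 1%:E.
  rewrite /M mix_measureT; change ((1 - e)%:E * P setT + e%:E = 1%:E)%E.
  by rewrite probability_setT mule1 -EFinD subrK.
apply: EFin_inj; rewrite -(integral_hker_shift MT) ge0_integral_mix_measure_prod.
- have hker_r_shift :
      (\int[P]_y (hker dist z y mu + 2)%:E = (Eh_z dist P z mu + 2)%:E)%E.
    under eq_integral do rewrite (hkerC dist_metric).
    exact: integral_hker_l_shift.
  rewrite /= (integral_hker_shift (probability_setT P)) integral_hker_l_shift.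
  by rewrite hker_r_shift -!EFinM -!EFinD.
- by move=> p; rewrite lee_fin hker_add2_ge0.
- by apply/measurable_EFinP; exact: measurable_funD.
Qed.

Lemma IF_quotientE z e : 0 < e <= 1 ->
  IF_quotient dist mu P z e = 2 - 2 * depth dist mu P - Eh_z dist P z mu
    - e * (4 - 2 * depth dist mu P - 2 * (Eh_z dist P z mu + 2)
           + (hker dist z z mu + 2)) / 2.
Proof.
case/andP => e0 e1; rewrite /IF_quotient.
have -> : depth dist mu (mixture P z e) =
  (4 - (4 - 2 * depth dist mu (mixture P z e))) / 2 by field.
by rewrite depth_mixture ?(ltW e0) ?e1//; field; rewrite gt_eqF.
Qed.

Lemma cvg_IF_quotient z :
  IF_quotient dist mu P z @ 0^'+ --> 2 - 2 * depth dist mu P - Eh_z dist P z mu.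
Proof.
set c := 2 - 2 * depth dist mu P - Eh_z dist P z mu.
set k := (4 - 2 * depth dist mu P - 2 * (Eh_z dist P z mu + 2)
          + (hker dist z z mu + 2)) / 2.
have affine : \forall e \near 0^'+, c - e * k = IF_quotient dist mu P z e.
  near=> e; rewrite IF_quotientE ?mulrA//; apply/andP; split.
  - by near: e; exact: nbhs_right_gt.
  - by near: e; apply: nbhs_right_le; exact: ltr01.
apply: cvg_trans (near_eq_cvg affine) _; apply: cvg_at_right_filter.
rewrite -[X in _ --> X]subr0; apply: cvgB; first exact: cvg_cst.
by rewrite -[X in _ --> X](mul0r k); apply: cvgM; [exact: cvg_id|exact: cvg_cst].
Unshelve. all: by end_near.
Qed.

Lemma norm_influence_le4 z :
  `|2 - 2 * depth dist mu P - Eh_z dist P z mu| <= 4.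
Proof.
have := norm_Rintegral_le (P \x P)%E measurable_hker_mu
  (fun p => norm_hker_le2 dist_metric p.1 p.2 mu).
have := norm_Rintegral_le P (measurable_hker_l z)
  (fun x => norm_hker_le2 dist_metric x z mu).
rewrite /depth /Eh_z /Rintegral !ler_norml; set Ehz := fine _; set Eh := fine _.
by move=> /andP[? ?] /andP[? ?]; apply/andP; split; lra.
Qed.

End depth_influence.

Theorem theorem2 (R : realType) (dX : measure_display) (X : measurableType dX)
  (dist : X -> X -> R)
  (Hmetric : is_metric dist) (Hcomplete : metric_complete dist)
  (Hsep : metric_separable dist) (Hborel : metric_borel dist)
  (P : probability X R) (mu z : X) :
  (IF_quotient dist mu P z @ 0^'+ -->
     2 - 2 * depth dist mu P - Eh_z dist P z mu) /\
  (forall z' : X, `|influence dist mu P z'| <= 4).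
Proof.
split=> [|z']; first exact: cvg_IF_quotient.
rewrite /influence (cvg_lim _ (cvg_IF_quotient Hmetric Hsep Hborel (z := z')))//.
exact: norm_influence_le4.
Qed.
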